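(* Fix a positive integer $n$ and form the graph whose vertices are the unordered tuples (multisets) of powers of $2$ with sum $n$, with an edge between a tuple $\lambda$ of length $\ell$ and a tuple $\mu$ of length $\ell-1$ whenever $\mu$ is obtained from $\lambda$ by replacing exactly two entries of $\lambda$ by their sum. Then for every $\ell$, the subgraph induced on all vertices of length $\ell$ and $\ell-1$ is connected; in particular any two tuples of length $\ell$ are joined by a path in this subgraph. *)

From mathcomp Require Import all_boot.
From Stdlib Require Import Relations.
Set Implicit Arguments. Unset Strict Implicit. Unset Printing Implicit Defensive.

Definition is_pow2 (x : nat) : Prop := exists k : nat, x = 2 ^ k.

(* A vertex: an unordered tuple (multiset) of powers of 2 with sum n,
   represented canonically by its nondecreasingly sorted list of entries. *)
Definition is_vertex (n : nat) (s : seq nat) : Prop :=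
  sorted leq s /\ (forall x, x \in s -> is_pow2 x) /\ sumn s = n.

Definition merge_step (lam mu : seq nat) : Prop :=
  exists (a b : nat) (rest : seq nat),
    perm_eq lam [:: a, b & rest] /\ perm_eq mu ((a + b) :: rest).

(* The graph: edge between lam (length l) and mu (length l-1) when mu is a merge of lam;
   merge_step automatically forces size mu = (size lam).-1. *)
Definition adjacent (n : nat) (x y : seq nat) : Prop :=
  is_vertex n x /\ is_vertex n y /\ (merge_step x y \/ merge_step y x).

Definition in_layer (n l : nat) (s : seq nat) : Prop :=
  is_vertex n s /\ (size s = l \/ size s = l.-1).

Definition layer_adj (n l : nat) (x y : seq nat) : Prop :=
  in_layer n l x /\ in_layer n l y /\ adjacent n x y.

(** If two tuples u, v of the same layer share an entry x, delete it:
    the rests lie in the layers l-1, l-2 of the graph for n - x, so they are joined by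
    induction, and re-inserting x joins u and v. If neither contains a 1, all entries
    are even and halving reduces to n/2. Otherwise, say 1 lies in v but not in u; then n
    is even, and halving v (pairing up its 1s) yields a binary partition of n/2 that
    contains a 1 and is shorter than v; refining it to length l-1 and doubling gives a
    tuple z without 1s that contains a 2. Then u and z are joined by the halving case,
    z is adjacent to the tuple z' obtained by splitting its 2 into 1 + 1, and z' shares
    the entry 1 with v. *)

From mathcomp Require Import all_boot zify.
From Stdlib Require Import Relations.

Set Implicit Arguments.
Unset Strict Implicit.
Unset Printing Implicit Defensive.

Notation layer_path n l := (clos_refl_trans (seq nat) (layer_adj n l)).

Definition layer_connected (n : nat) : Prop :=
  forall l u v, in_layer n l u -> in_layer n l v -> layer_path n l u v.

Definition binary_partition (n : nat) (s : seq nat) : Prop :=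
  (forall x, x \in s -> is_pow2 x) /\ sumn s = n.

Lemma size_le_sumn (s : seq nat) : {in s, forall y, 0 < y} -> size s <= sumn s.
Proof.
elim: s => //= a s IHs s_gt0.
have := s_gt0 a (mem_head a s).
by have := IHs (sub_in1 (fun y => @mem_behead _ (a :: s) y) s_gt0); lia.
Qed.

Lemma sumn_le_size (s : seq nat) : {in s, forall y, y <= 1} -> sumn s <= size s.
Proof.
elim: s => //= a s IHs s_le1.
have := s_le1 a (mem_head a s).
by have := IHs (sub_in1 (fun y => @mem_behead _ (a :: s) y) s_le1); lia.
Qed.

Lemma sumn_count_mem (x : nat) (s : seq nat) :
  sumn s = x * count_mem x s + sumn (filter (predC1 x) s).
Proof.
elim: s => [|a s IHs] /=; first by rewrite muln0.
by rewrite IHs; case: eqVneq => [->|] /=; lia.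
Qed.

Lemma sumn_map_double (s : seq nat) : sumn (map double s) = (sumn s).*2.
Proof. by elim: s => //= a s ->; rewrite doubleD. Qed.

Lemma sort_leq_perm (s t : seq nat) : perm_eq s t -> sort leq s = sort leq t.
Proof.
by move=> st; apply/perm_sortP => //; [exact: leq_total | exact: leq_trans | exact: anti_leq].
Qed.

Lemma sort_cons_sort (x : nat) (s : seq nat) :
  sort leq (x :: sort leq s) = sort leq (x :: s).
Proof. by apply: sort_leq_perm; rewrite perm_cons perm_sort. Qed.

Lemma sort_vertex n s : is_vertex n s -> sort leq s = s.
Proof. by case=> s_sorted _; apply: sorted_sort s_sorted; exact: leq_trans. Qed.

Lemma pow2_gt0 x : is_pow2 x -> 0 < x.
Proof. by case=> k ->; rewrite expn_gt0. Qed.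

Lemma pow2_double x : is_pow2 x -> is_pow2 x.*2.
Proof. by case=> k ->; exists k.+1; rewrite expnS mul2n. Qed.

Lemma pow2_half x : is_pow2 x -> x != 1 -> is_pow2 x./2 /\ x./2.*2 = x.
Proof. by case=> [[|k] ->] // _; rewrite expnS mul2n doubleK; split=> //; exists k. Qed.

Lemma binary_partition_size n s : binary_partition n s -> size s <= n.
Proof. by case=> s_pow2 <-; apply: size_le_sumn => y /s_pow2 /pow2_gt0. Qed.

Lemma binary_partition0 s : binary_partition 0 s -> s = [::].
Proof. by move/binary_partition_size; case: s. Qed.

Lemma binary_partition_rem n x s :
  binary_partition n s -> x \in s -> binary_partition (n - x) (rem x s).
Proof.
case=> s_pow2 sum_s xs; split; first by move=> y /mem_rem /s_pow2.
by rewrite -sum_s (perm_sumn (perm_to_rem xs)) /= addKn.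
Qed.

Lemma binary_partition_double n s :
  binary_partition n s -> binary_partition n.*2 (map double s).
Proof.
case=> s_pow2 sum_s; split; last by rewrite sumn_map_double sum_s.
by move=> _ /mapP [y /s_pow2 y_pow2 ->]; exact: pow2_double.
Qed.

Lemma binary_partition_halve n s : binary_partition n s -> 1 \notin s ->
  [/\ binary_partition n./2 (map half s), map double (map half s) = s & n./2.*2 = n].
Proof.
case=> s_pow2 sum_s s_no1.
have s_half y : y \in s -> is_pow2 y./2 /\ y./2.*2 = y.
  by move=> ys; apply: pow2_half (s_pow2 y ys) _; apply: contraNneq s_no1 => <-.
have dbl_half : map double (map half s) = s.
  by rewrite -map_comp -[RHS]map_id; apply/eq_in_map => y /s_half [].
have sum_half : (sumn (map half s)).*2 = n by rewrite -sumn_map_double dbl_half.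
split=> //; last by rewrite -sum_half doubleK.
split; last by rewrite -sum_half doubleK.
by move=> _ /mapP [y /s_half [y_pow2 _] ->].
Qed.

Lemma binary_partition_split N s : binary_partition N s -> size s < N ->
  exists t, [/\ binary_partition N t, size t = (size s).+1 & (1 \in s -> 1 \in t)].
Proof.
move=> [s_pow2 sum_s] size_s.
have [y ys y_gt1] : exists2 y, y \in s & 1 < y.
  apply/hasP; apply: contraTT size_s => /hasPn s_le1.
  rewrite -leqNgt -sum_s; apply: sumn_le_size => z zs; rewrite leqNgt; exact: s_le1.
have [half_pow2 half_y] := pow2_half (s_pow2 y ys) (negbT (gtn_eqF y_gt1)).
exists [:: y./2, y./2 & rem y s]; split.
- split; first by move=> z; rewrite !inE => /or3P [/eqP -> | /eqP -> | /mem_rem /s_pow2].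
  by rewrite -sum_s (perm_sumn (perm_to_rem ys)) /= -half_y; lia.
- by rewrite /= size_rem //; case: (s) ys.
- by move=> s1; rewrite !inE rem_mem ?orbT // neq_ltn y_gt1.
Qed.

Lemma binary_partition_grow N s k : binary_partition N s -> 1 \in s -> size s <= k <= N ->
  exists w, [/\ binary_partition N w, 1 \in w & size w = k].
Proof.
move=> s_part s1; elim: k => [|k IHk] /andP [size_s k_le]; first by case: (s) s1 size_s.
have [size_s_le | size_s_gt] := leqP (size s) k; last by exists s; split=> //; lia.
have [w [w_part w1 size_w]] := IHk ltac:(lia).
have [t [t_part size_t t1]] := binary_partition_split w_part ltac:(lia).
by exists t; split=> //; [exact: t1 | rewrite size_t size_w].
Qed.

Lemma binary_partition_halve_with_one N v : binary_partition N.*2 v -> 1 \in v ->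
  exists w, [/\ binary_partition N w, 1 \in w & size w < size v].
Proof.
move=> [v_pow2 sum_v] v1; set c := count_mem 1 v; set R := filter (predC1 1) v.
have R_part : binary_partition (sumn R) R.
  by split=> // y; rewrite mem_filter => /andP [_ /v_pow2].
have R_no1 : 1 \notin R by rewrite mem_filter.
have [[hR_pow2 sum_hR] _ even_R] := binary_partition_halve R_part R_no1.
have c_gt0 : 0 < c by rewrite -has_count has_pred1.
have sum_v' : N.*2 = c + sumn R by rewrite -sum_v (sumn_count_mem 1) mul1n.
have size_v : size v = c + size R by rewrite size_filter -(count_predC (pred1 1) v).
exists (nseq c./2 1 ++ map half R); split.
- split; last by rewrite sumn_cat sumn_nseq sum_hR; lia.
  by move=> y; rewrite mem_cat => /orP [/nseqP [-> _] | /hR_pow2 //]; exists 0.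
- by rewrite mem_cat mem_nseq eqxx andbT; apply/orP; left; lia.
- by rewrite size_cat size_nseq size_map size_v ltn_add2r; lia.
Qed.

Lemma in_layer_size n l s : in_layer n l s -> l.-1 <= size s <= l.
Proof. by case=> _ [] ->; lia. Qed.

Lemma in_layer_sort n l s : binary_partition n s -> size s = l \/ size s = l.-1 ->
  in_layer n l (sort leq s).
Proof.
move=> [s_pow2 sum_s] size_s; split; last by rewrite size_sort.
split; first exact: (sort_sorted leq_total).
split; first by move=> x; rewrite mem_sort; exact: s_pow2.
by rewrite (perm_sumn (permEl (perm_sort _ _))).
Qed.

Lemma in_layer_cons m l x s : 0 < l -> is_pow2 x -> in_layer m l.-1 s ->
  in_layer (m + x) l (sort leq (x :: s)).
Proof.
move=> l_gt0 x_pow2 [[_ [s_pow2 sum_s]] size_s]; apply: in_layer_sort.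
  by split; [move=> y; rewrite inE => /predU1P [-> | /s_pow2] | rewrite /= sum_s addnC].
by case: size_s => /= ->; lia.
Qed.

Lemma in_layer_double m l s : in_layer m l s -> in_layer m.*2 l (sort leq (map double s)).
Proof.
case=> [[_ s_part] size_s]; apply: in_layer_sort; last by rewrite size_map.
exact: binary_partition_double.
Qed.

Lemma in_layer_halve n l u : in_layer n l u -> 1 \notin u ->
  [/\ in_layer n./2 l (sort leq (map half u)),
      sort leq (map double (sort leq (map half u))) = u & n./2.*2 = n].
Proof.
move=> [u_vertex size_u] u_no1.
have [half_part dbl_half even_n] := binary_partition_halve u_vertex.2 u_no1.
split=> //; first by apply: in_layer_sort; rewrite ?size_map.
rewrite -[RHS](sort_vertex u_vertex) -[in RHS]dbl_half; apply: sort_leq_perm.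
by apply: perm_map; rewrite perm_sort.
Qed.

Lemma merge_step_perm s s' t t' :
  perm_eq s s' -> perm_eq t t' -> merge_step s t -> merge_step s' t'.
Proof.
move=> ss' tt' [a [b [r [s_ab t_ab]]]]; exists a, b, r.
by rewrite -(permPl ss') -(permPl tt').
Qed.

Lemma merge_step_cons x s t : merge_step s t -> merge_step (x :: s) (x :: t).
Proof.
move=> [a [b [r [s_ab t_ab]]]]; exists a, b, (x :: r); split.
- apply: perm_trans (_ : perm_eq _ [:: x, a, b & r]) _; first by rewrite perm_cons.
  by rewrite (perm_catCA [:: x] [:: a; b]).
- apply: perm_trans (_ : perm_eq _ [:: x, a + b & r]) _; first by rewrite perm_cons.
  by rewrite (perm_catCA [:: x] [:: a + b]).
Qed.

Lemma merge_step_map (f : nat -> nat) s t : {morph f : a b / a + b} ->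
  merge_step s t -> merge_step (map f s) (map f t).
Proof.
move=> fD [a [b [r [s_ab t_ab]]]]; exists (f a), (f b), (map f r).
by rewrite -fD; split; [exact: (perm_map f s_ab) | exact: (perm_map f t_ab)].
Qed.

Lemma layer_path_sym n l u v : layer_path n l u v -> layer_path n l v u.
Proof.
elim=> [x y [x_in [y_in [_ [_ xy]]]] | x | x y z _ yx _ zy].
- apply: rt_step; split=> //; split=> //; split; first exact: y_in.1.
  by split; [exact: x_in.1 | case: xy; [right | left]].
- exact: rt_refl.
- exact: rt_trans zy yx.
Qed.

Lemma layer_path_sort_map (f : seq nat -> seq nat) m l m' l' :
  (forall s, in_layer m l s -> in_layer m' l' (sort leq (f s))) ->
  (forall s t, merge_step s t -> merge_step (f s) (f t)) ->
  forall u v, layer_path m l u v -> layer_path m' l' (sort leq (f u)) (sort leq (f v)).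
Proof.
move=> f_layer f_merge u v; elim=> [x y [x_in [y_in [_ [_ xy]]]] | x | x y z _ xy _ yz].
- have [fx_in fy_in] := (f_layer x x_in, f_layer y y_in).
  apply: rt_step; split=> //; split=> //; split; first exact: fx_in.1.
  split; first exact: fy_in.1.
  case: xy => /f_merge fxy; [left | right];
    by apply: merge_step_perm fxy; rewrite perm_sym perm_sort.
- exact: rt_refl.
- exact: rt_trans xy yz.
Qed.

Lemma layer_path_cons m l x u v : 0 < l -> is_pow2 x -> layer_path m l.-1 u v ->
  layer_path (m + x) l (sort leq (x :: u)) (sort leq (x :: v)).
Proof.
move=> l_gt0 x_pow2; apply: layer_path_sort_map => [s | s t]; first exact: in_layer_cons.
exact: merge_step_cons.
Qed.

Lemma layer_path_double m l u v : layer_path m l u v ->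
  layer_path m.*2 l (sort leq (map double u)) (sort leq (map double v)).
Proof.
apply: layer_path_sort_map => [s | s t]; first exact: in_layer_double.
by apply: merge_step_map; exact: doubleD.
Qed.

Section InductionStep.

Variable n : nat.
Hypothesis n_gt0 : 0 < n.
Hypothesis IH : forall m, 0 < m < n -> layer_connected m.

Lemma layer_path_common_entry l x u v : in_layer n l u -> in_layer n l v ->
  x \in u -> x \in v -> layer_path n l u v.
Proof.
move=> u_in v_in xu xv.
have rest_in w : in_layer n l w -> x \in w -> in_layer (n - x) l.-1 (sort leq (rem x w)).
  move=> [[_ w_part] size_w] xw; apply: in_layer_sort; first exact: binary_partition_rem.
  by rewrite size_rem //; case: size_w => ->; [left | right].
have rest_eq w : in_layer n l w -> x \in w -> sort leq (x :: sort leq (rem x w)) = w.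
  move=> [w_vertex _] xw; rewrite sort_cons_sort -[RHS](sort_vertex w_vertex).
  by apply: sort_leq_perm; rewrite perm_sym perm_to_rem.
have [x_pow2 x_le_n] : is_pow2 x /\ x <= n.
  case: u_in => [[_ [u_pow2 sum_u]] _]; split; first exact: u_pow2.
  by rewrite -sum_u (perm_sumn (perm_to_rem xu)) leq_addr.
have [x_eq_n | x_lt_n] : x = n \/ x < n by lia.
  have rest_nil w : in_layer n l w -> x \in w -> rem x w = [::].
    move=> [[_ w_part] _] xw; have := binary_partition_rem w_part xw.
    by rewrite x_eq_n subnn; exact: binary_partition0.
  by rewrite -(rest_eq u) // -(rest_eq v) // !rest_nil //; exact: rt_refl.
have size_u_gt0 : 0 < size u by case: (u) xu.
have l_gt0 : 0 < l by have := in_layer_size u_in; lia.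
have x_gt0 := pow2_gt0 x_pow2.
have rest_path := @IH (n - x) ltac:(lia) _ _ _ (rest_in u u_in xu) (rest_in v v_in xv).
have := layer_path_cons l_gt0 x_pow2 rest_path.
by rewrite subnK // !rest_eq.
Qed.

Lemma layer_path_without_ones l u v : in_layer n l u -> in_layer n l v ->
  1 \notin u -> 1 \notin v -> layer_path n l u v.
Proof.
move=> u_in v_in u_no1 v_no1.
have [hu_in hu_eq even_n] := in_layer_halve u_in u_no1.
have [hv_in hv_eq _] := in_layer_halve v_in v_no1.
have := layer_path_double (@IH n./2 ltac:(lia) _ _ _ hu_in hv_in).
by rewrite even_n hu_eq hv_eq.
Qed.

Lemma layer_path_mixed_ones l u v : in_layer n l u -> in_layer n l v ->
  1 \notin u -> 1 \in v -> layer_path n l u v.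
Proof.
move=> u_in v_in u_no1 v1.
have [[hu_vertex _] _ even_n] := in_layer_halve u_in u_no1.
have v_part : binary_partition n./2.*2 v by rewrite even_n; exact: v_in.1.2.
have [w0 [w0_part w01 size_w0]] := binary_partition_halve_with_one v_part v1.
have size_hu : size u <= n./2.
  by have := binary_partition_size hu_vertex.2; rewrite size_sort size_map.
have size_u := in_layer_size u_in; have size_v := in_layer_size v_in.
have [w [w_part w1 size_w]] := binary_partition_grow (k := l.-1) w0_part w01 ltac:(lia).
set z := sort leq (map double w).
have z_in : in_layer n l z.
  rewrite -even_n; apply: in_layer_sort; last by rewrite size_map; right.
  exact: binary_partition_double.
have z_no1 : 1 \notin z.
  by rewrite mem_sort; apply/mapP => -[y _ /(congr1 odd)]; rewrite odd_double.
have z2 : 2 \in z by rewrite mem_sort; apply/mapP; exists 1.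
set z' := sort leq [:: 1, 1 & rem 2 z].
have z'_in : in_layer n l z'.
  have [[_ [z_pow2 sum_z]] _] := z_in; apply: in_layer_sort.
    split; last by rewrite /= -sum_z (perm_sumn (perm_to_rem z2)).
    by move=> y; rewrite !inE => /or3P [/eqP -> | /eqP -> | /mem_rem /z_pow2] //; exists 0.
  have : 0 < size w by case: (w) w1.
  by left; rewrite /= size_rem // /z size_sort size_map size_w; lia.
have z_z' : layer_adj n l z z'.
  split=> //; split=> //; split; first exact: z_in.1.
  split; first exact: z'_in.1.
  by right; exists 1, 1, (rem 2 z); split; [rewrite perm_sort | exact: perm_to_rem].
apply: rt_trans (layer_path_without_ones u_in z_in u_no1 z_no1) _.
apply: rt_trans (rt_step _ _ _ _ z_z') _.
by apply: (layer_path_common_entry (x := 1)) => //; rewrite mem_sort mem_head.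
Qed.

Lemma layer_connected_step : layer_connected n.
Proof.
move=> l u v u_in v_in.
case: (boolP (1 \in u)) => u1; case: (boolP (1 \in v)) => v1.
- exact: layer_path_common_entry u1 v1.
- exact/layer_path_sym/layer_path_mixed_ones.
- exact: layer_path_mixed_ones.
- exact: layer_path_without_ones.
Qed.

End InductionStep.

Lemma layer_connected_pos n : 0 < n -> layer_connected n.
Proof.
elim/ltn_ind: n => n IHn n_gt0; apply: layer_connected_step => // m /andP [m_gt0 m_lt_n].
exact: IHn.
Qed.

Theorem mainTheorem11 (n : nat) (hn : 0 < n) (l : nat) (hl : 1 <= l) :
  forall u v : seq nat, in_layer n l u -> in_layer n l v ->
    clos_refl_trans (seq nat) (layer_adj n l) u v.
Proof.
exact: layer_connected_pos.
Qed.
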